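(* Let $Q\in\mathbb{R}^{n\times n}$ be symmetric positive definite, $g\in\mathbb{R}^n$, $\sigma\in(0,1/2]$, $tol\ge 0$. There exist constants $\delta_2>0$ and $\bar K\in\mathbb{N}$ (depending only on $Q,g,\sigma,tol,n$) such that, for any iteration of the generic random active set method and conditional on the history up to that iteration, the probability that the method stops within the subsequent $\bar K$ iterations is at least $\delta_2$.
   Context: Consider the problem $\min_{x\in\mathbb{R}^n}\tfrac12 x^TQx+g^Tx$ subject to $x\ge 0$. For index sets $A,B\subseteq\{1,\dots,n\}$, $x_A$ denotes the subvector of $x$ indexed by $A$ and $Q_{A,B}$ the submatrix with rows in $A$ and columns in $B$. For a finite index set $S$ and a vector $p=(p_j)_{j\in S}$ of probabilities, $\mathrm{rand}(S,p)$ denotes a random subset of $S$ containing each $j\in S$ independently with probability $p_j$. Generic random active set method (RAS): Step 0: given $\sigma\in(0,1/2]$, an initial active set $A$, $I=\{1,\dots,n\}\setminus A$, and $tol\ge 0$. Step 1: compute $x_I=-Q_{I,I}^{-1}g_I$ and $s_A=Q_{A,I}x_I+g_A$; set $Im=\{i\in I: x_i\le 0\}$, $Am=\{j\in A: s_j<-tol\}$, $Ip=I\setminus Im$, $Ap=A\setminus Am$. Step 2: if $Im\cup Am=\emptyset$, stop. Otherwise choose (possibly depending on the whole history) vectors $p_{Im}\in\mathbb{R}^{|Im|}$, $p_{Am}\in\mathbb{R}^{|Am|}$ with every entry in $[\sigma,1-\sigma]$, and let $Imc=\mathrm{rand}(Im,p_{Im})$, $Imf=Im\setminus Imc$, $Amc=\mathrm{rand}(Am,p_{Am})$,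 $Amf=Am\setminus Amc$ (fresh independent randomness at each iteration). Step 3: set $I\leftarrow Ip\cup Imf\cup Amc$, $A\leftarrow Ap\cup Amf\cup Imc$, and return to Step 1. *)

From HB Require Import structures.
From mathcomp Require Import all_boot all_order all_algebra.
From mathcomp Require Import reals.
Set Implicit Arguments. Unset Strict Implicit. Unset Printing Implicit Defensive.
Import Order.TTheory GRing.Theory Num.Theory.
Local Open Scope ring_scope.

Section RAS.
Variables (R : realType) (n : nat) (Q : 'M[R]_n) (g : 'cV[R]_n) (tol : R).

Definition sym_pos_def (M : 'M[R]_n) : Prop :=
  M^T = M /\ forall x : 'cV[R]_n, x != 0 -> 0 < (x^T *m M *m x) 0 0.

Definition QII (I : {set 'I_n}) : 'M[R]_#|I| :=
  \matrix_(i < #|I|, j < #|I|) Q (enum_val i) (enum_val j).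
Definition gI (I : {set 'I_n}) : 'cV[R]_#|I| :=
  \col_(i < #|I|) g (enum_val i) 0.
Definition xI (I : {set 'I_n}) : 'cV[R]_#|I| := - (invmx (QII I) *m gI I).

Definition sA (A : {set 'I_n}) (j : 'I_n) : R :=
  \sum_(i < #|~: A|) Q j (enum_val i) * xI (~: A) i 0 + g j 0.

Definition Im (A : {set 'I_n}) : {set 'I_n} :=
  [set enum_val i | i : 'I_#|~: A| & xI (~: A) i 0 <= 0].
Definition Am (A : {set 'I_n}) : {set 'I_n} := [set j in A | sA A j < - tol].

(* the set of indices that are randomly switched *)
Definition Mv (A : {set 'I_n}) : {set 'I_n} := Im A :|: Am A.

Definition stops (A : {set 'I_n}) : bool := Mv A == set0.

(* Given C = Imc :|: Amc (the indices selected by rand), the new active set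
   A <- Ap :|: Amf :|: Imc. *)
Definition next_act (A C : {set 'I_n}) : {set 'I_n} :=
  (A :\: Am A) :|: (Am A :\: C) :|: (Im A :&: C).

(* probability that rand selects exactly C among Mv A, with independent
   selections of probability p j *)
Definition sel_prob (p : 'I_n -> R) (M C : {set 'I_n}) : R :=
  \prod_(j in M) (if j \in C then p j else 1 - p j).

(* A strategy maps the history of active sets (ending with the current one)
   to the probability vector used at the current iteration. *)
Definition strategy := seq {set 'I_n} -> 'I_n -> R.

Definition valid_strategy (sigma : R) (st : strategy) : Prop :=
  forall (h : seq {set 'I_n}) (A : {set 'I_n}) (j : 'I_n),
    j \in Mv A -> sigma <= st (rcons h A) j <= 1 - sigma.

(* Probability that the method, with past history h and current active set A
   (at Step 1), stops within the next K iterations. *)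
Fixpoint stop_prob (st : strategy) (K : nat) (h : seq {set 'I_n})
    (A : {set 'I_n}) : R :=
  if stops A then 1 else
  match K with
  | 0 => 0
  | K'.+1 =>
      \sum_(C : {set 'I_n} | C \subset Mv A)
        sel_prob (st (rcons h A)) (Mv A) C *
        stop_prob st K' (rcons h A) (next_act A C)
  end.

End RAS.

(** The selection probabilities are bounded below by [sigma], so any single
    switching pattern has probability at least [sigma ^+ n]; it therefore
    suffices to exhibit, from every active set, a deterministic sequence of
    switches reaching a stopping set, of length bounded uniformly in the
    active set.  Switching one index at a time does it: as long as some
    [x_i <= 0], move along the segment from the current feasible point to the
    subspace minimiser until a coordinate hits zero and make it active; this
    never increases [q x = x^T Q x / 2 + g^T x] and shrinks the inactive set.
    At a feasible subspace minimiser that does not stop, some multiplier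
    [s_j < -tol <= 0] lets us free [j] and strictly decrease [q] by a
    coordinate step.  Since there are finitely many active sets, the strict
    decrease of [q] between feasible minimisers bounds the number of rounds. *)

From Pilot Require Import Defs.
From HB Require Import structures.
From mathcomp Require Import all_boot all_order all_algebra.
From mathcomp Require Import reals.
From mathcomp Require Import lra ring.
Import Order.TTheory GRing.Theory Num.Theory.
Local Open Scope ring_scope.
Set Implicit Arguments. Unset Strict Implicit. Unset Printing Implicit Defensive.

Section ColumnVectors.
Variables (R : comPzRingType) (n : nat).
Implicit Types (u w : 'cV[R]_n) (I : {set 'I_n}).

Definition vdot u w : R := \sum_k u k 0 * w k 0.

Lemma vdotC u w : vdot u w = vdot w u.
Proof. by apply: eq_bigr => k _; rewrite mulrC. Qed.

Lemma vdotDl u v w : vdot (u + v) w = vdot u w + vdot v w.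
Proof. by rewrite /vdot -big_split; apply: eq_bigr => k _; rewrite mxE mulrDl. Qed.

Lemma vdotDr u v w : vdot w (u + v) = vdot w u + vdot w v.
Proof. by rewrite !(vdotC w) vdotDl. Qed.

Lemma vdotZl a u w : vdot (a *: u) w = a * vdot u w.
Proof. by rewrite /vdot mulr_sumr; apply: eq_bigr => k _; rewrite mxE mulrA. Qed.

Lemma vdotZr a u w : vdot w (a *: u) = a * vdot w u.
Proof. by rewrite vdotC vdotZl vdotC. Qed.

Lemma vdot_deltal j w : vdot (delta_mx j 0) w = w j 0.
Proof.
rewrite /vdot (bigD1 j) //= mxE !eqxx mul1r big1 ?addr0 // => k /negPf kj.
by rewrite mxE kj mul0r.
Qed.

Definition embed I (v : 'cV[R]_#|I|) : 'cV[R]_n :=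
  \col_k \sum_(i < #|I|) (enum_val i == k)%:R * v i 0.

Lemma embed_enum_val I (v : 'cV[R]_#|I|) i : embed v (enum_val i) 0 = v i 0.
Proof.
rewrite mxE (bigD1 i) //= eqxx mul1r big1 ?addr0 // => j /negPf ji.
by rewrite (inj_eq enum_val_inj) ji mul0r.
Qed.

Lemma embed_notin I (v : 'cV[R]_#|I|) k : k \notin I -> embed v k 0 = 0.
Proof.
move=> kI; rewrite mxE big1 // => j _.
by case: eqP => [e|_]; [move: kI; rewrite -e enum_valP | rewrite mul0r].
Qed.

Lemma vdot_embedl I (v : 'cV[R]_#|I|) w :
  vdot (embed v) w = \sum_(i < #|I|) v i 0 * w (enum_val i) 0.
Proof.
rewrite /vdot; under eq_bigr do rewrite mxE mulr_suml.
rewrite exchange_big /=; apply: eq_bigr => i _.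
rewrite (bigD1 (enum_val i)) //= eqxx mul1r big1 ?addr0 // => k /negPf ki.
by rewrite eq_sym ki !mul0r.
Qed.

Lemma mulmx_embed I (M : 'M[R]_n) (v : 'cV[R]_#|I|) k :
  (M *m embed v) k 0 = \sum_(i < #|I|) M k (enum_val i) * v i 0.
Proof.
have -> : (M *m embed v) k 0 = vdot (embed v) (\col_j M k j).
  by rewrite mxE; apply: eq_bigr => j _; rewrite mxE mulrC.
by rewrite vdot_embedl; apply: eq_bigr => i _; rewrite mxE mulrC.
Qed.

End ColumnVectors.

Section QuadraticModel.
Variables (R : realType) (n : nat) (Q : 'M[R]_n) (g : 'cV[R]_n).
Hypothesis Q_spd : sym_pos_def Q.
Implicit Types (x u w y : 'cV[R]_n) (I J : {set 'I_n}).

Lemma Q_sym i j : Q i j = Q j i.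
Proof. by case: Q_spd => QT _; rewrite -{1}QT mxE. Qed.

Lemma vdot_mulmxC u w : vdot u (Q *m w) = vdot w (Q *m u).
Proof.
rewrite /vdot; under eq_bigr do rewrite mxE mulr_sumr.
under [in RHS]eq_bigr do rewrite mxE mulr_sumr.
rewrite exchange_big; apply: eq_bigr => i _; apply: eq_bigr => j _.
by rewrite Q_sym; ring.
Qed.

Lemma quad_gt0 x : x != 0 -> 0 < vdot x (Q *m x).
Proof.
case: Q_spd => _ pos /pos; rewrite -mulmxA mxE.
by under eq_bigr do rewrite mxE.
Qed.

Lemma quad_ge0 x : 0 <= vdot x (Q *m x).
Proof.
have [->|/quad_gt0/ltW //] := eqVneq x 0.
by rewrite /vdot big1 // => k _; rewrite mxE mul0r.
Qed.

Lemma Q_diag_gt0 j : 0 < Q j j.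
Proof.
have /quad_gt0 : delta_mx j 0 != 0 :> 'cV[R]_n.
  by apply/eqP => /matrixP/(_ j 0); rewrite !mxE !eqxx => /eqP; rewrite oner_eq0.
by rewrite vdot_deltal -colE mxE.
Qed.

Lemma QII_mulmx I (v : 'cV[R]_#|I|) i :
  (QII Q I *m v) i 0 = (Q *m embed v) (enum_val i) 0.
Proof. by rewrite mulmx_embed mxE; apply: eq_bigr => j _; rewrite mxE. Qed.

Lemma QII_unit I : QII Q I \in unitmx.
Proof.
rewrite -row_free_unit; apply: inj_row_free => v vQ.
have QvT : QII Q I *m v^T = 0.
  have QIT : (QII Q I)^T = QII Q I by apply/matrixP => i j; rewrite !mxE Q_sym.
  by rewrite -QIT -trmx_mul vQ trmx0.
have ev0 : embed v^T = 0.
  apply/eqP; apply: contraT => /quad_gt0; rewrite vdot_embedl big1 ?ltxx // => i _.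
  by rewrite -QII_mulmx QvT !mxE mulr0.
by apply/rowP => j; have := embed_enum_val (v^T) j; rewrite ev0 !mxE => <-.
Qed.

Definition grad x := Q *m x + g.

Definition xsub I := embed (xI Q g I).

Lemma xsub_notin I k : k \notin I -> xsub I k 0 = 0.
Proof. exact: embed_notin. Qed.

Lemma grad_xsub I k : k \in I -> grad (xsub I) k 0 = 0.
Proof.
move=> kI; rewrite -(enum_rankK_in kI kI) mxE -QII_mulmx.
by rewrite /xI mulmxN mulmxA mulmxV ?QII_unit // mul1mx !mxE addNr.
Qed.

Lemma sA_grad A j : sA Q g A j = grad (xsub (~: A)) j 0.
Proof. by rewrite /sA mxE mulmx_embed. Qed.

Lemma Im_xsub A : Defs.Im Q g A = [set k in ~: A | xsub (~: A) k 0 <= 0].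
Proof.
apply/setP => k; rewrite !inE; apply/imsetP/idP.
  case=> i; rewrite inE => xi ->; rewrite /xsub embed_enum_val xi andbT.
  by move: (enum_valP i); rewrite inE.
case/andP=> kA xk; have kI : k \in ~: A by rewrite inE.
exists (enum_rank_in kI k); last by rewrite enum_rankK_in.
by rewrite inE -(embed_enum_val (xI Q g (~: A))) enum_rankK_in.
Qed.

Definition q x := vdot x (Q *m x) / 2 + vdot g x.

Lemma q_expand x d : q (x + d) = q x + vdot d (grad x) + vdot d (Q *m d) / 2.
Proof.
by rewrite /q /grad mulmxDr !vdotDl !vdotDr (vdot_mulmxC x d) (vdotC g d); field.
Qed.

Lemma q_xsub_min J w : (forall k, k \notin J -> w k 0 = 0) -> q (xsub J) <= q w.
Proof.
move=> wJ; have := @grad_xsub J; have := @xsub_notin J.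
set x := xsub J; clearbody x => xJ gradJ.
rewrite -(subrKC x w) q_expand.
have -> : vdot (w - x) (grad x) = 0.
  rewrite /vdot big1 // => k _; have [kJ|kJ] := boolP (k \in J).
    by rewrite gradJ // mulr0.
  by rewrite !mxE wJ // xJ // subrr mul0r.
by have := quad_ge0 (w - x); lra.
Qed.

Lemma q_segment_le w y t : 0 <= t <= 1 -> q y <= q w -> q (w + t *: (y - w)) <= q w.
Proof.
case/andP=> t0 t1; rewrite -{1}(subrKC w y) !q_expand -scalemxAr.
rewrite vdotZl !vdotZl !vdotZr.
set a := vdot _ _; set b := vdot _ (Q *m _) => h.
have b0 : 0 <= b by apply: quad_ge0.
have h1 : t * (a + b / 2) <= 0 by rewrite mulr_ge0_le0 //; lra.
have h2 : 0 <= t * (1 - t) * b by rewrite !mulr_ge0 // subr_ge0.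
have e : t * a + t * (t * b) / 2 = t * (a + b / 2) - t * (1 - t) * b / 2 by field.
lra.
Qed.

(* The step length is the exact minimiser of [q] along the [j]-th coordinate. *)
Lemma q_coordinate_step x j : grad x j 0 < 0 ->
  q (x + (- grad x j 0 / Q j j) *: delta_mx j 0) < q x.
Proof.
move=> Gj; rewrite q_expand -scalemxAr !vdotZl !vdotZr !vdot_deltal.
have -> : (Q *m (delta_mx j 0 : 'cV_n)) j 0 = Q j j by rewrite -colE mxE.
have Qp := Q_diag_gt0 j; set a := grad x j 0; set c := Q j j.
have e : - a / c * a + - a / c * (- a / c * c) / 2 = - (a ^+ 2 / c) / 2.
  by field; rewrite gt_eqF.
have : 0 < a ^+ 2 / c by rewrite divr_gt0 // exprn_even_gt0 //= ltr0_neq0.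
lra.
Qed.

End QuadraticModel.

Section ZeroCrossing.
Variable R : realFieldType.
Implicit Types a b t : R.

(* The parameter at which the segment from [a >= 0] to [b <= 0] crosses zero;
   when [a = b = 0] the division by zero yields [0], which still works. *)
Definition crossing a b := a / (a - b).

Lemma crossing_itv a b : 0 <= a -> b <= 0 -> 0 <= crossing a b <= 1.
Proof.
move=> a0 b0; rewrite /crossing; have [ab0|ab0] := eqVneq (a - b) 0.
  by rewrite ab0 invr0 mulr0 lexx ler01.
have ab : 0 < a - b by rewrite lt_def ab0 /=; lra.
by rewrite divr_ge0 ?(ltW ab) //= ler_pdivrMr // mul1r; lra.
Qed.

Lemma crossing_root a b : 0 <= a -> b <= 0 -> a + crossing a b * (b - a) = 0.
Proof.
move=> a0 b0; rewrite /crossing; have [ab0|ab0] := eqVneq (a - b) 0.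
  by rewrite ab0 invr0 mulr0 mul0r addr0; lra.
by field.
Qed.

Lemma crossing_ge0 a b t : 0 <= a -> b <= 0 -> 0 <= t <= crossing a b ->
  0 <= a + t * (b - a).
Proof.
move=> a0 b0 /andP[t0 tc]; have := crossing_root a0 b0.
have : 0 <= (crossing a b - t) * (a - b) by rewrite mulr_ge0 ?subr_ge0 //; lra.
nra.
Qed.

Lemma segment_ge0 a b t : 0 <= a -> 0 <= b -> 0 <= t <= 1 -> 0 <= a + t * (b - a).
Proof. by move=> a0 b0 /andP[t0 t1]; nra. Qed.

End ZeroCrossing.

Section SwitchingPaths.
Variables (R : realType) (n : nat) (Q : 'M[R]_n) (g : 'cV[R]_n) (tol : R).
Hypothesis Q_spd : sym_pos_def Q.
Hypothesis tol_ge0 : 0 <= tol.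
Implicit Types (A B C I J : {set 'I_n}) (k j : 'I_n) (w : 'cV[R]_n).

Local Notation Im := (Defs.Im Q g).
Local Notation Am := (Am Q g tol).
Local Notation Mv := (Mv Q g tol).
Local Notation next_act := (next_act Q g tol).
Local Notation stops := (stops Q g tol).
Local Notation q := (q Q g).
Local Notation xsub := (xsub Q g).

Lemma Im_subC A : Im A \subset ~: A.
Proof. by rewrite Im_xsub; apply/subsetP => k; rewrite inE => /andP[]. Qed.

Lemma Am_sub A : Am A \subset A.
Proof. by apply/subsetP => k; rewrite inE => /andP[]. Qed.

Lemma next_act_Im1 A k : k \in Im A -> next_act A [set k] = k |: A.
Proof.
move=> kIm; have kA : k \notin A by have := subsetP (Im_subC A) k kIm; rewrite inE.
apply/setP => x; rewrite !inE; have [->|xk] := eqVneq x k; first by rewrite kIm !orbT.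
by rewrite andbF orbF /=; case: (x \in A); case: (sA Q g A x < - tol).
Qed.

Lemma next_act_Am1 A j : j \in Am A -> next_act A [set j] = A :\ j.
Proof.
move=> jAm; have jIm : j \notin Im A.
  by apply/negP => /(subsetP (Im_subC A)); rewrite inE (subsetP (Am_sub A) j jAm).
apply/setP => x; rewrite !inE; have [->|xj] /= := eqVneq x j.
  by move: jAm; rewrite inE => /andP[-> ->]; rewrite (negPf jIm).
by rewrite andbF orbF; case: (x \in A); case: (sA Q g A x < - tol).
Qed.

Fixpoint reach K A : bool :=
  stops A || if K is K'.+1 then
    [exists C : {set 'I_n}, (C \subset Mv A) && reach K' (next_act A C)] else false.

Lemma reach_mono K K' A : (K <= K')%N -> reach K A -> reach K' A.
Proof.
elim: K K' A => [|K IH] [|K'] A //= KK'; first by case/orP => [->|].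
case/orP => [->//|/existsP[C /andP[CM r]]].
by apply/orP; right; apply/existsP; exists C; rewrite CM (IH K').
Qed.

Definition leads_to A B := exists m, forall K, reach K B -> reach (K + m) A.

Lemma leads_to_refl A : leads_to A A.
Proof. by exists 0%N => K; rewrite addn0. Qed.

Lemma leads_to_trans A B C : leads_to A B -> leads_to B C -> leads_to A C.
Proof.
by case=> m1 h1 [m2 h2]; exists (m2 + m1)%N => K /h2/h1; rewrite addnA.
Qed.

Lemma leads_to_next_act A C : C \subset Mv A -> leads_to A (next_act A C).
Proof.
move=> CM; exists 1%N => K r; rewrite addn1 /=.
by apply/orP; right; apply/existsP; exists C; rewrite CM.
Qed.

Definition feasible J w :=
  (forall k, 0 <= w k 0) /\ (forall k, k \notin J -> w k 0 = 0).

Lemma feasible_xsub I : Im (~: I) = set0 -> feasible I (xsub I).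
Proof.
move=> Im0; split=> k; last exact: xsub_notin.
have [kI|kI] := boolP (k \in I); last by rewrite xsub_notin.
rewrite leNgt; apply/negP => xk.
have : k \in Im (~: I) by rewrite Im_xsub setCK inE kI ltW.
by rewrite Im0 inE.
Qed.

(* Move from [w] towards [xsub J] until the first coordinate of [Im (~: J)]
   reaches zero, and deactivate it. *)
Lemma feasible_step J w k0 : feasible J w -> k0 \in Im (~: J) ->
  exists2 k, k \in Im (~: J) & exists2 w', feasible (J :\ k) w' & q w' <= q w.
Proof.
move=> [w0 wJ] k0Im; set y := xsub J.
have ImE i : (i \in Im (~: J)) = (i \in J) && (y i 0 <= 0).
  by rewrite Im_xsub setCK inE.
pose r i := crossing (w i 0) (y i 0).
have [k kIm kmin] := arg_minP r k0Im.
have {}kIm : k \in Im (~: J) := kIm; exists k => //.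
move: (kIm); rewrite ImE => /andP[kJ yk].
have /andP[t0 t1] : 0 <= r k <= 1 by apply: crossing_itv.
exists (w + r k *: (y - w)); last first.
  by apply: (q_segment_le Q_spd); rewrite ?t0 ?t1 // q_xsub_min.
have w'E i : (w + r k *: (y - w)) i 0 = w i 0 + r k * (y i 0 - w i 0).
  by rewrite !mxE.
split=> i; rewrite w'E.
  have [iJ|iJ] := boolP (i \in J); last by rewrite wJ // xsub_notin // subrr mulr0 addr0.
  have [yi|yi] := leP (y i 0) 0; last by apply: segment_ge0; rewrite ?t0 ?t1 // ltW.
  have iIm : i \in Im (~: J) by rewrite ImE iJ yi.
  by apply: crossing_ge0; rewrite ?t0 ?kmin.
rewrite !inE negb_and negbK => /orP[/eqP->|iJ]; first exact: crossing_root.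
by rewrite wJ // xsub_notin // subrr mulr0 addr0.
Qed.

Lemma descent_to_feasible J w : feasible J w ->
  exists J', [/\ Im (~: J') = set0, q (xsub J') <= q w & leads_to (~: J) (~: J')].
Proof.
have [N] := ubnP #|J|; elim: N J w => // N IH J w JN fw.
have [Im0|/set0Pn[k0 k0Im]] := eqVneq (Im (~: J)) set0.
  by exists J; split; [|apply: (q_xsub_min g Q_spd); case: fw|apply: leads_to_refl].
have [k kIm [w' fw' qw']] := feasible_step fw k0Im.
have kJ : k \in J by have := subsetP (Im_subC (~: J)) k kIm; rewrite setCK.
have [|J' [Im0 qJ' lJ']] := IH (J :\ k) w' _ fw'.
  by move: JN; rewrite (cardsD1 k J) kJ.
exists J'; split=> //; first exact: le_trans qJ' qw'.
apply: leads_to_trans lJ'.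
have -> : ~: (J :\ k) = next_act (~: J) [set k].
  by rewrite next_act_Im1 // setCD setUC.
by apply: leads_to_next_act; rewrite sub1set inE kIm.
Qed.

(* Freeing an index [j] with [s_j < -tol <= 0] allows a strict decrease of [q]. *)
Lemma improve_nonstopping I : Im (~: I) = set0 -> ~~ stops (~: I) ->
  exists I', [/\ Im (~: I') = set0, q (xsub I') < q (xsub I) & leads_to (~: I) (~: I')].
Proof.
move=> Im0; rewrite /Defs.stops /Defs.Mv Im0 set0U => /set0Pn[j jAm].
move: (jAm); rewrite inE sA_grad setCK => /andP[jI sj].
have Gj : grad Q g (xsub I) j 0 < 0 by apply: lt_le_trans sj _; rewrite oppr_le0.
set eps := - grad Q g (xsub I) j 0 / Q j j.
have eps0 : 0 <= eps by rewrite divr_ge0 ?oppr_ge0 ?(ltW Gj) ?ltW ?(Q_diag_gt0 Q_spd).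
have [xI0 xIJ] := feasible_xsub Im0.
have fw : feasible (j |: I) (xsub I + eps *: delta_mx j 0).
  have wE k : (xsub I + eps *: delta_mx j 0) k 0 = xsub I k 0 + eps * (k == j)%:R.
    by rewrite !mxE andbT.
  split=> k; rewrite wE.
    by rewrite addr_ge0 ?xI0 // mulr_ge0 // ler0n.
  by rewrite !inE negb_or => /andP[/negPf kj kI]; rewrite xIJ // kj mulr0 addr0.
have [I' [Im0' qI' lI']] := descent_to_feasible fw.
exists I'; split=> //; first exact: le_lt_trans qI' (q_coordinate_step Q_spd Gj).
apply: leads_to_trans lI'.
have -> : ~: (j |: I) = next_act (~: I) [set j].
  by rewrite next_act_Am1 //; apply/setP => x; rewrite !inE negb_or andbC.
by apply: leads_to_next_act; rewrite sub1set inE jAm orbT.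
Qed.

Lemma reach_feasible I : Im (~: I) = set0 -> exists K, reach K (~: I).
Proof.
pose below I := [set I' | (Im (~: I') == set0) && (q (xsub I') < q (xsub I))].
have [N] := ubnP #|below I|; elim: N I => // N IH I bN Im0.
have [st|nst] := boolP (stops (~: I)); first by exists 0%N; rewrite /= st.
have [I' [Im0' qI' [m lI']]] := improve_nonstopping Im0 nst.
have [|K rI'] := IH I' _ Im0'; last by exists (K + m)%N; apply: lI'.
rewrite -ltnS; apply: leq_trans bN; apply: proper_card; apply/properP; split.
  apply/subsetP => J; rewrite !inE => /andP[-> /lt_trans]; exact.
by exists I'; rewrite !inE Im0' eqxx ?qI' // ltxx.
Qed.

Lemma reach_exists A : exists K, reach K A.
Proof.
have [|I [Im0 _ [m lI]]] := @descent_to_feasible (~: A) 0.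
  by split=> k; rewrite mxE.
have [K rI] := reach_feasible Im0.
by exists (K + m)%N; rewrite -[A]setCK; apply: lI.
Qed.

Lemma reach_uniform : exists K, forall A, reach K A.
Proof.
exists (\max_A xchoose (reach_exists A)) => A.
exact: reach_mono (leq_bigmax A) (xchooseP (reach_exists A)).
Qed.

Variables (sigma : R) (st : strategy R n).
Hypothesis sigma_gt0 : 0 < sigma.
Hypothesis sigma_le_half : sigma <= 1 / 2.
Hypothesis st_valid : valid_strategy Q g tol sigma st.

Let sigma_le1 : sigma <= 1.
Proof. by apply: le_trans sigma_le_half _; rewrite ler_pdivrMr // mul1r ler1n. Qed.

Lemma sel_prob_lb h A C : sigma ^+ n <= sel_prob (st (rcons h A)) (Mv A) C.
Proof.
apply: le_trans (_ : \prod_(j in Mv A) sigma <= _).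
  rewrite prodr_const; apply: ler_wiXn2l; rewrite ?(ltW sigma_gt0) //.
  by rewrite -[X in (_ <= X)%N]card_ord max_card.
apply: ler_prod => j /(st_valid h)/andP[lo hi].
by rewrite (ltW sigma_gt0) /=; case: (j \in C); rewrite // lerBrDr addrC -lerBrDr.
Qed.

Lemma sel_prob_ge0 h A C : 0 <= sel_prob (st (rcons h A)) (Mv A) C.
Proof. by apply: le_trans (sel_prob_lb h A C); rewrite exprn_ge0 ?ltW. Qed.

Lemma stop_prob_ge0 K h A : 0 <= stop_prob Q g tol st K h A.
Proof.
elim: K h A => [|K IH] h A /=; case: (Defs.stops _ _ _ _) => //.
by apply: sumr_ge0 => C _; rewrite mulr_ge0 ?sel_prob_ge0.
Qed.

Lemma stop_prob_reach K h A : reach K A -> sigma ^+ (n * K) <= stop_prob Q g tol st K h A.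
Proof.
elim: K h A => [|K IH] h A /=; first by rewrite orbF muln0 expr0 => ->.
have [_ _|_ /existsP[C /andP[CM rC]]] := boolP (stops A).
  by rewrite exprn_ile1 ?sigma_le1 // ltW.
rewrite (bigD1 C) //= -[X in X <= _]addr0 mulnS exprD.
apply: lerD; last by apply: sumr_ge0 => D _; rewrite mulr_ge0 ?sel_prob_ge0 ?stop_prob_ge0.
by apply: ler_pM; rewrite ?exprn_ge0 ?sel_prob_lb ?IH // ltW.
Qed.

End SwitchingPaths.

Theorem lemma2p2 (R : realType) (n : nat) (Q : 'M[R]_n) (g : 'cV[R]_n)
    (sigma tol : R) :
  sym_pos_def Q -> 0 < sigma -> sigma <= 1 / 2 -> 0 <= tol ->
  exists delta2 : R, 0 < delta2 /\
  exists Kbar : nat,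
    forall st : strategy R n, valid_strategy Q g tol sigma st ->
    forall (h : seq {set 'I_n}) (A : {set 'I_n}),
      delta2 <= stop_prob Q g tol st Kbar h A.
Proof.
move=> Q_spd sigma_gt0 sigma_le_half tol_ge0.
have [K reachK] := reach_uniform g Q_spd tol_ge0.
exists (sigma ^+ (n * K)); split; first exact: exprn_gt0.
exists K => st st_valid h A.
exact: stop_prob_reach.
Qed.
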